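(* Let $\mathbf{u}=(u_n)$ be an a-sequence with $q_\mathbf{u}<\infty$. Let $S=\{n_1<n_2<\cdots<n_k<\cdots\}$ be an infinite subset of $S^*_\mathbf{u}$ such that $d_i:=n_{i+1}-n_i\ge 2$ for all $i\ge1$, and let $$x_S=\frac{1}{u_{n_1}}-\frac{1}{u_{n_2}}+\frac{1}{u_{n_3}}-\frac{1}{u_{n_4}}+\cdots \in\mathbb{T}.$$ Then: (a) if $n_k\le n<n_{k+1}$, then $\|u_{n-1}x_S\|\le\|u_{n_k-1}x_S\|$, and $$\frac{1}{q_\mathbf{u}}-\frac{1}{2^{d_k-1}q_\mathbf{u}^2}\le\frac{1}{q_{n_k}}-\frac{1}{q_{n_k}\cdots q_{n_{k+1}}}\le\|u_{n_k-1}x_S\|\le\frac{1}{q_{n_k}}-\frac{1}{q_{n_k}\cdots q_{n_{k+1}}}+\frac{1}{q_{n_k}\cdots q_{n_{k+2}}};$$ (b) $\varrho_\mathbf{u}(x_S,0)=\max\{\|x_S\|,\ \sup_{k\in\mathbb{N}}\|u_{n_k-1}x_S\|\}$; (c) if $S'\neq S$ is another set with the same properties as $S$, then $x_S\neq x_{S'}$.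
   Context: An a-sequence is a strictly increasing sequence of integers $\mathbf{u}=(u_n)_{n\in\mathbb{N}}$ with $u_n\mid u_{n+1}$ for all $n$. Its ratios are $q_0=u_0$ and $q_n=u_n/u_{n-1}$ ($n>0$); $q_\mathbf{u}=\limsup_n q_n$ and $S^*_\mathbf{u}=\{m\in\mathbb{N}: q_m=q_\mathbf{u}\}$. $\mathbb{T}=\mathbb{R}/\mathbb{Z}$, $\|x\|$ is the distance from $x$ to the nearest integer, $d(x,y)=\|x-y\|$, and $\varrho_\mathbf{u}(x,y)=\sup_n\max\{d(x,y),d(u_nx,u_ny)\}$ on $\mathbb{T}$. *)

From HB Require Import structures.
From mathcomp Require Import all_boot all_order all_algebra.
From mathcomp Require Import all_classical all_reals all_analysis.
Set Implicit Arguments. Unset Strict Implicit. Unset Printing Implicit Defensive.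
Import Order.TTheory GRing.Theory Num.Theory numFieldNormedType.Exports.
Local Open Scope ring_scope.

(* a-sequence: strictly increasing integers with u_n | u_(n+1).
   (Such a sequence is necessarily positive, so we take values in nat.) *)
Definition a_sequence (u : nat -> nat) : Prop :=
  (0 < u 0)%N /\ (forall n, u n < u n.+1)%N /\ (forall n, (u n %| u n.+1)%N).

Definition aratio (u : nat -> nat) (n : nat) : nat :=
  if n is m.+1 then (u n %/ u m)%N else u 0.

(* u_(m-1), with the convention u_(-1) = 1 *)
Definition u_pred (u : nat -> nat) (m : nat) : nat :=
  if m is m'.+1 then u m' else 1%N.

Definition q_limsup (R : realType) (u : nat -> nat) : \bar R :=
  limn_esup (fun n => ((aratio u n)%:R : R)%:E).

Definition Sstar (R : realType) (u : nat -> nat) : set nat :=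
  [set m | ((aratio u m)%:R : R)%:E = q_limsup R u].

Definition tnorm (R : realType) (x : R) : R :=
  Num.min (x - (Num.floor x)%:~R) ((Num.floor x + 1)%:~R - x).

Definition tdist (R : realType) (x y : R) : R := tnorm (x - y).

Definition rho (R : realType) (u : nat -> nat) (x y : R) : R :=
  sup (range (fun n => Num.max (tdist x y) (tdist ((u n)%:R * x) ((u n)%:R * y)))).

(* S = {n_1 < n_2 < ...} given by its increasing enumeration ns (ns k = n_(k+1));
   admissible: S subset of S*_u, gaps d_i >= 2 (hence strictly increasing, infinite) *)
Definition admissible (R : realType) (u : nat -> nat) (ns : nat -> nat) : Prop :=
  (forall k, Sstar R u (ns k)) /\ (forall k, (ns k + 2 <= ns k.+1)%N).

(* x_S = 1/u_{n_1} - 1/u_{n_2} + 1/u_{n_3} - ... (a real representative) *)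
Definition xS (R : realType) (u : nat -> nat) (ns : nat -> nat) : R :=
  limn (series (fun k => (-1) ^+ k / ((u (ns k))%:R : R))).

From HB Require Import structures.
From mathcomp Require Import all_boot all_order all_algebra.
From mathcomp Require Import all_classical all_reals all_analysis.
From mathcomp Require Import zify ring lra.
Import Order.TTheory GRing.Theory Num.Theory numFieldNormedType.Exports.
Local Open Scope ring_scope.
Local Open Scope classical_set_scope.

(* Multiplying x_S by u_{m-1} turns every term 1/u_{n_j} with n_j < m into an
   integer, so ||u_{m-1} x_S|| only sees u_{m-1} times the alternating tail that
   starts at the first n_N >= m.  The usual alternating-series estimates squeeze
   this tail between 1/u_{n_N} - 1/u_{n_{N+1}} and that plus 1/u_{n_{N+2}}, and
   after multiplication by u_{m-1} these become reciprocals of products of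
   consecutive ratios q_i.  For m = n_k this gives (a), and since d_k >= 2 the
   product q_{n_k} ... q_{n_{k+1}} exceeds 2 q_u, so ||u_{n_k-1} x_S|| > 1/(2 q_u).
   For m outside S the product contains q_{n_N} = q_u and another ratio >= 2,
   so ||u_{m-1} x_S|| <= 1/(2 q_u).  This dichotomy yields the monotonicity in (a),
   the supremum in (b), and (c): S is recovered from x_S modulo 1. *)

Local Notation qprod u m n := (\prod_(m <= i < n.+1) aratio u i)%N.

Section ASequence.
Context {u : nat -> nat}.
Hypothesis hu : a_sequence u.

Lemma aseq_lt : {homo u : m n / (m < n)%N}.
Proof. by case: hu => _ [incr _]; apply: homo_ltn incr; apply: ltn_trans. Qed.

Lemma aseq_dvd : {homo u : m n / (m <= n)%N >-> (m %| n)%N}.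
Proof.
case: hu => _ [_ dvd]; apply: homo_leq dvd => // a b c; exact: dvdn_trans.
Qed.

Lemma aseq_gt0 n : (0 < u n)%N.
Proof.
case: n => [|n]; first by case: hu.
exact: leq_ltn_trans (leq0n _) (aseq_lt _ _ (ltn0Sn n)).
Qed.

Lemma upred_gt0 m : (0 < u_pred u m)%N.
Proof. by case: m => //= m; apply: aseq_gt0. Qed.

Lemma upred_mul_aratio n : (u_pred u n * aratio u n)%N = u n.
Proof.
case: n => [|n] /=; first by rewrite mul1n.
by rewrite mulnC divnK //; apply: aseq_dvd _ _ (leqnSn n).
Qed.

Lemma aratio_gt0 n : (0 < aratio u n)%N.
Proof. by have := aseq_gt0 n; rewrite -upred_mul_aratio muln_gt0 => /andP[]. Qed.

Lemma aratio_ge2 n : (0 < n)%N -> (2 <= aratio u n)%N.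
Proof.
case: n => // n _; have := aseq_lt _ _ (ltnSn n).
rewrite -(upred_mul_aratio n.+1) /= -[X in (X < _)%N]muln1 ltn_pmul2l ?aseq_gt0 //.
Qed.

Lemma prod_aratio_gt0 m n : (0 < \prod_(m <= i < n) aratio u i)%N.
Proof. exact: prodn_gt0 aratio_gt0. Qed.

Lemma upred_mul_qprod m n : (m <= n)%N -> (u_pred u m * qprod u m n)%N = u n.
Proof.
move=> /subnKC <-; elim: (n - m)%N => [|L IH].
  by rewrite addn0 big_nat1 upred_mul_aratio.
rewrite addnS big_nat_recr /=; last by lia.
by rewrite mulnA IH; exact: (upred_mul_aratio (m + L).+1).
Qed.

Lemma exp2_le_aseq n : (2 ^ n <= u n)%N.
Proof.
elim: n => [|n IH]; first exact: aseq_gt0.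
by rewrite -upred_mul_aratio expnS mulnC leq_mul // aratio_ge2.
Qed.

Lemma exp2_le_prod_aratio a L : (0 < a)%N ->
  (2 ^ L <= \prod_(a <= i < a + L) aratio u i)%N.
Proof.
move=> a_gt0; elim: L => [|L IH]; first by rewrite addn0 big_geq.
rewrite addnS big_nat_recr ?leq_addr //= expnS mulnC leq_mul // aratio_ge2 //.
exact: leq_trans (leq_addr _ _).
Qed.

Lemma aratio_le_qprod m c n : (m <= c <= n)%N -> (aratio u c <= qprod u m n)%N.
Proof.
case/andP=> mc cn; rewrite (big_cat_nat mc) /=; last by lia.
rewrite big_nat_recl // mulnCA -[X in (X <= _)%N]muln1 leq_mul //.
by rewrite muln_gt0; apply/andP; split; apply: prodn_gt0 => i; apply: aratio_gt0.
Qed.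

Lemma qprod_ge_ends a b : (a + 2 <= b)%N ->
  (aratio u a * aratio u b * 2 ^ (b - a).-1 <= qprod u a b)%N.
Proof.
move=> ab; rewrite (@big_cat_nat _ _ _ a.+1) ?ltnS //=; last by lia.
rewrite big_nat1 big_nat_recr /=; last by lia.
have := @exp2_le_prod_aratio a.+1 (b - a).-1 isT.
rewrite (_ : (a.+1 + (b - a).-1)%N = b); last by lia.
by move=> h; rewrite -mulnA leq_mul // mulnC leq_mul.
Qed.

Lemma qprod_ge_double m b : (m < b)%N -> (0 < m \/ 2 <= aratio u m)%N ->
  (2 * aratio u b <= qprod u m b)%N.
Proof.
case: b => // b mb two; rewrite big_nat_recr ?(ltnW mb) //= -/(aratio u b.+1).
rewrite leq_mul2r; apply/orP; right.
case: two => [m_gt0|two].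
- apply: leq_trans (aratio_ge2 b _) (aratio_le_qprod m b b _); lia.
- apply: leq_trans two (aratio_le_qprod m m b _); lia.
Qed.

End ASequence.

Section TorusNorm.
Variable R : realType.
Implicit Types (w : R) (n : int).

Lemma tnorm_le_half w : tnorm w <= 2^-1.
Proof.
have := floor_le w; have := floorD1_gt w.
by rewrite /tnorm ge_min intrD => ? ?; case: (lerP (w - (Num.floor w)%:~R) 2^-1) => ?; lra.
Qed.

Lemma tnorm_attained w : exists n, tnorm w = `|w - n%:~R|.
Proof.
have := floor_le w; have := floorD1_gt w; rewrite /tnorm intrD => lt_w le_w.
case: (leP (w - (Num.floor w)%:~R) ((Num.floor w)%:~R + 1%:~R - w)) => _.
- by exists (Num.floor w); rewrite ger0_norm // subr_ge0.
- by exists (Num.floor w + 1)%R; rewrite ler0_norm ?intrD ?opprB //; lra.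
Qed.

Lemma tnorm_le_dist w n : tnorm w <= `|w - n%:~R|.
Proof.
have := floor_le w; have := floorD1_gt w.
rewrite /tnorm ge_min intrD => lt_w le_w.
have [->|[n_le|n_ge]] : n = Num.floor w \/ (n <= Num.floor w - 1)%R \/ (Num.floor w + 1 <= n)%R
  by lia.
- by rewrite ger0_norm ?lexx // subr_ge0.
- move: n_le; rewrite -(ler_int R) intrB => ?; rewrite ger0_norm; lra.
- move: n_ge; rewrite -(ler_int R) intrD => ?; rewrite ler0_norm; lra.
Qed.

Lemma tnormDz w n : tnorm (w + n%:~R) = tnorm w.
Proof.
apply/le_anti/andP; split.
- have [m ->] := tnorm_attained w.
  apply: le_trans (tnorm_le_dist _ (m + n)) _; rewrite intrD.
  by rewrite (_ : w + _ - _ = w - m%:~R) //; ring.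
- have [m ->] := tnorm_attained (w + n%:~R).
  apply: le_trans (tnorm_le_dist _ (m - n)) _; rewrite intrB.
  by rewrite (_ : w - _ = w + n%:~R - m%:~R) //; ring.
Qed.

Lemma tnormN w : tnorm (- w) = tnorm w.
Proof.
suff le_tnormN (v : R) : tnorm (- v) <= tnorm v.
  by apply/le_anti; rewrite le_tnormN -{1}(opprK w) le_tnormN.
have [m ->] := tnorm_attained v.
by apply: le_trans (tnorm_le_dist _ (- m)) _; rewrite intrN -opprD normrN.
Qed.

Lemma tnorm_intD_sign a b w : a \is a Num.int -> tnorm (a + (-1) ^+ b * w) = tnorm w.
Proof.
case/intrP=> n ->; rewrite addrC tnormDz.
by case: (odd b) (signr_odd R b) => <-; rewrite ?expr0 ?expr1 ?mul1r ?mulN1r ?tnormN.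
Qed.

Lemma tnorm_le_norm w : tnorm w <= `|w|.
Proof. by have := tnorm_le_dist w 0; rewrite subr0. Qed.

Lemma tnorm_id w : 0 <= w <= 2^-1 -> tnorm w = w.
Proof.
case/andP=> w_ge0 w_le; apply/le_anti/andP; split.
  by rewrite -{2}(ger0_norm w_ge0) tnorm_le_norm.
have [n ->] := tnorm_attained w.
have [->|n_neq0] := eqVneq n 0; first by rewrite subr0 ger0_norm.
have := norm_intr_ge1 (intr_int R n); rewrite intr_eq0 => /(_ n_neq0) n_ge1.
have := lerB_dist n%:~R w; rewrite distrC (ger0_norm w_ge0); lra.
Qed.

End TorusNorm.

Lemma alt_sum_bounds (R : realType) (f : nat -> R) :
  (forall i, 0 <= f i) -> (forall i, f i.+1 <= f i) ->
  forall L, 0 <= \sum_(0 <= i < L) (-1) ^+ i * f i <= f 0%N.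
Proof.
move=> f_ge0 f_decr L; elim: L f f_ge0 f_decr => [|L IH] f f_ge0 f_decr.
  by rewrite big_geq // lexx f_ge0.
rewrite big_nat_recl // expr0 mul1r.
under eq_bigr do rewrite exprS mulN1r mulNr.
rewrite sumrN; have := IH (f \o succn) (fun i => f_ge0 i.+1) (fun i => f_decr i.+1).
by have := f_decr 0%N; rewrite /= => ? /andP[? ?]; apply/andP; split; lra.
Qed.

Section AlternatingTail.
Variables (R : realType) (f : nat -> R).
Hypotheses (f_ge0 : forall i, 0 <= f i) (f_decr : forall i, f i.+1 <= f i).
Local Notation S := (series (fun k => (-1) ^+ k * f k)).
Hypothesis S_cvg : cvgn S.
Local Notation tail N := ((-1) ^+ N * (limn S - S N%N)).

Lemma series_alt_shift N L :
  S (N + L)%N - S N = (-1) ^+ N * \sum_(0 <= i < L) (-1) ^+ i * f (N + i)%N.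
Proof.
rewrite /series /= (big_cat_nat (leq0n N) (leq_addr L N)) /= addrAC subrr add0r.
rewrite -{1}(add0n N) big_addn addKn mulr_sumr; apply: eq_bigr => i _.
by rewrite [(i + N)%N]addnC exprD mulrA.
Qed.

Lemma alt_tail_ge0_le N : 0 <= tail N <= f N.
Proof.
have shift_cvg : (-1) ^+ N * (S M - S N) @[M --> \oo] --> tail N.
  by apply: cvgM; [exact: cvg_cst | apply: cvgB => //; exact: cvg_cst].
have bounded : \forall M \near \oo, 0 <= (-1) ^+ N * (S M - S N) <= f N.
  near=> M; have /subnKC <- : (N <= M)%N by near: M; exists N.
  rewrite series_alt_shift signrMK.
  have := alt_sum_bounds _ (fun i => f (N + i)%N) (fun i => f_ge0 _) _ (M - N).
  by rewrite addn0; apply=> i; rewrite addnS.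
rewrite -(cvg_lim (@Rhausdorff R) shift_cvg); apply/andP; split.
- by apply: limr_ge; [exact: cvgP shift_cvg | apply: filterS bounded => M /andP[]].
- by apply: limr_le; [exact: cvgP shift_cvg | apply: filterS bounded => M /andP[]].
Unshelve. all: by end_near.
Qed.

Lemma alt_tail_rec N : tail N = f N - f N.+1 + tail N.+2.
Proof.
have S2 : S N.+2 = S N + (-1) ^+ N * (f N - f N.+1) by rewrite !seriesSr exprS; ring.
have sq : (-1) ^+ N * (-1) ^+ N = 1 :> R by rewrite -exprD -signr_odd oddD addbb.
rewrite S2 !exprS; set s := (-1) ^+ N in sq *.
transitivity (f N - f N.+1 + s * (limn S - S N) - s * s * (f N - f N.+1)); last by ring.
by rewrite sq mul1r; ring.
Qed.

Lemma alt_tail_bounds N : f N - f N.+1 <= tail N <= f N - f N.+1 + f N.+2.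
Proof.
rewrite alt_tail_rec; have /andP[ge0 le] := alt_tail_ge0_le N.+2.
by apply/andP; split; lra.
Qed.

End AlternatingTail.

Section AlternatingPoint.
Variables (R : realType) (u ns : nat -> nat) (Q : nat).
Hypotheses (hu : a_sequence u) (ns_gap : forall k, (ns k + 2 <= ns k.+1)%N).
Hypothesis ns_ratio : forall k, aratio u (ns k) = Q.
Local Notation x := (xS R u ns).
Local Notation inv_u k := (((u (ns k))%:R : R)^-1).
Local Notation S := (series (fun k => (-1) ^+ k * inv_u k)).
Local Notation tail N := ((-1) ^+ N * (x - S N%N)).
Local Notation upred m := ((u_pred u m)%:R : R).

Lemma ns_lt : {homo ns : k l / (k < l)%N}.
Proof. by apply: homo_ltn ltn_trans _ => k; have := ns_gap k; lia. Qed.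

Lemma ns_le : {homo ns : k l / (k <= l)%N}.
Proof. by apply: homo_leq leqnn leq_trans _ => k; have := ns_gap k; lia. Qed.

Lemma ns_ge k : (k <= ns k)%N.
Proof. by elim: k => // k IH; have := ns_gap k; lia. Qed.

Lemma inv_u_gt0 k : 0 < inv_u k.
Proof. by rewrite invr_gt0 ltr0n aseq_gt0. Qed.

Lemma inv_u_lt k : inv_u k.+1 < inv_u k.
Proof.
rewrite ltf_pV2 ?posrE ?ltr0n ?aseq_gt0 // ltr_nat.
exact: aseq_lt hu _ _ (ns_lt _ _ (ltnSn k)).
Qed.

Lemma xS_series_cvg : cvgn S.
Proof.
apply: normed_cvg; rewrite (_ : [normed _] = series (fun k => inv_u k)); last first.
  apply: funext => n /=; apply: eq_bigr => k _.
  by rewrite normrM normrX normrN normr1 expr1n mul1r ger0_norm // ltW // inv_u_gt0.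
apply: (@series_le_cvg R _ (geometric 1 (2^-1))) => [n|n|n|].
- exact: ltW (inv_u_gt0 n).
- exact: geometric_ge0.
- rewrite /geometric /= mul1r exprVn lef_pV2 ?posrE ?ltr0n ?aseq_gt0 ?exprn_gt0 //.
  by rewrite -natrX ler_nat (leq_trans _ (exp2_le_aseq hu _)) // leq_exp2l // ns_ge.
- by apply: is_cvg_geometric_series; rewrite ger0_norm //; lra.
Qed.

Lemma tail_bounds N :
  inv_u N - inv_u N.+1 <= tail N <= inv_u N - inv_u N.+1 + inv_u N.+2.
Proof.
exact: alt_tail_bounds (fun k => ltW (inv_u_gt0 k)) (fun k => ltW (inv_u_lt k)) xS_series_cvg N.
Qed.

Lemma tail_gt0_lt N : 0 < tail N < inv_u N.
Proof.
have /andP[lo hi] := tail_bounds N; have := inv_u_lt N; have := inv_u_lt N.+1.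
by move=> ? ?; apply/andP; split; lra.
Qed.

Lemma upred_mul_partial_int m N : (forall j, (j < N)%N -> (ns j < m)%N) ->
  upred m * S N \is a Num.int.
Proof.
elim: N => [|N IH] below; first by rewrite /series /= big_geq // mulr0.
rewrite seriesSr mulrDr; apply: rpredD; first by apply: IH => j jN; apply: below; lia.
have /dvdnP[c ->] : (u (ns N) %| u_pred u m)%N.
  by have := below N (ltnSn N); case: (m) => //= m'; rewrite ltnS; exact: aseq_dvd hu _ _.
have U_neq0 : (u (ns N))%:R != 0 :> R by rewrite pnatr_eq0 -lt0n aseq_gt0.
set s := (-1) ^+ N; have s_int : s \is a Num.int by rewrite rpredX // rpredN rpred1.
by rewrite natrM -mulrA (mulrCA _ s) mulfV // mulr1 rpredM ?natr_int.
Qed.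

Lemma tnorm_upred_xS m N : (forall j, (j < N)%N -> (ns j < m)%N) ->
  tnorm (upred m * x) = tnorm (upred m * tail N).
Proof.
move=> below; rewrite -[RHS](tnorm_intD_sign _ _ N _ (upred_mul_partial_int m N below)).
by rewrite mulrCA signrMK -mulrDr addrC subrK.
Qed.

Lemma upred_mul_inv_u m j : (m <= ns j)%N ->
  upred m * inv_u j = ((qprod u m (ns j))%:R)^-1.
Proof.
move=> /(upred_mul_qprod hu) <-; rewrite natrM invfM mulrA divff ?mul1r //.
by rewrite pnatr_eq0 -lt0n upred_gt0.
Qed.

Lemma tnorm_upred_le_inv_qprod m N :
  (forall j, (j < N)%N -> (ns j < m)%N) -> (m <= ns N)%N ->
  tnorm (upred m * x) <= ((qprod u m (ns N))%:R)^-1.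
Proof.
move=> below mN; rewrite (tnorm_upred_xS m N below) -upred_mul_inv_u //.
have /andP[t_gt0 t_lt] := tail_gt0_lt N.
apply: le_trans (tnorm_le_norm _ _) _; rewrite normrM !ger0_norm ?(ltW t_gt0) //.
exact: ler_wpM2l (ltW t_lt).
Qed.

Lemma Q_ge2 : (2 <= Q)%N.
Proof. by rewrite -(ns_ratio 1); exact: aratio_ge2 hu _ (ns_ge 1). Qed.

Lemma tnorm_upred_ns_bounds k :
  (Q%:R^-1 - ((qprod u (ns k) (ns k.+1))%:R)^-1 <= tnorm (upred (ns k) * x)) /\
  (tnorm (upred (ns k) * x) <= Q%:R^-1 - ((qprod u (ns k) (ns k.+1))%:R)^-1
                                + ((qprod u (ns k) (ns k.+2))%:R)^-1).
Proof.
rewrite (tnorm_upred_xS (ns k) k (fun j => ns_lt j k)).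
have e0 : upred (ns k) * inv_u k = Q%:R^-1 by rewrite upred_mul_inv_u // big_nat1 ns_ratio.
have e1 := upred_mul_inv_u (ns k) k.+1 (ns_le _ _ (leqnSn k)).
have e2 := upred_mul_inv_u (ns k) k.+2 (ns_le _ _ (leqW (leqnSn k))).
have c_ge0 : 0 <= upred (ns k) := ler0n _ _.
have /andP[lo hi] := tail_bounds k; have /andP[t_gt0 t_lt] := tail_gt0_lt k.
move: (ler_wpM2l c_ge0 lo) (ler_wpM2l c_ge0 hi).
rewrite mulrBr e0 e1 => lo'.
rewrite [X in _ <= X]mulrDr [X in _ <= X + _]mulrBr e0 e1 e2 => hi'.
have Q_half : Q%:R^-1 <= 2^-1 :> R.
  by rewrite lef_pV2 ?posrE ?ltr0n ?ler_nat ?Q_ge2 //; have := Q_ge2; lia.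
rewrite tnorm_id //; apply/andP; split; first by rewrite mulr_ge0 // ltW.
by rewrite -e0 in Q_half; apply: le_trans Q_half; rewrite ler_wpM2l // ltW.
Qed.

Lemma tnorm_upred_ns_gt k : ((2 * Q)%:R : R)^-1 < tnorm (upred (ns k) * x).
Proof.
have [lo _] := tnorm_upred_ns_bounds k; apply: lt_le_trans lo.
have Q_gt0 : (0 < Q)%N by have := Q_ge2; lia.
have Q_lt_P : (2 * Q < qprod u (ns k) (ns k.+1))%N.
  have := qprod_ge_ends hu _ _ (ns_gap k); rewrite !ns_ratio.
  have : (2 <= 2 ^ (ns k.+1 - ns k).-1)%N.
    by rewrite -[X in (X <= _)%N]expn1 leq_exp2l //; have := ns_gap k; lia.
  by have := Q_ge2; nia.
have : ((qprod u (ns k) (ns k.+1))%:R : R)^-1 < ((2 * Q)%:R)^-1.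
  by rewrite ltf_pV2 ?posrE ?ltr0n ?ltr_nat //; lia.
have : 0 < (Q%:R : R)^-1 by rewrite invr_gt0 ltr0n.
by rewrite natrM invfM; lra.
Qed.

Lemma tnorm_upred_off_ns m : (0 < m \/ 2 <= aratio u m)%N -> (forall k, ns k <> m) ->
  tnorm (upred m * x) <= ((2 * Q)%:R : R)^-1.
Proof.
move=> two off.
(* [N] is the first index with [m < n_N]; as [m] is no [n_j], all earlier [n_j] lie below [m]. *)
have [N mN minN] := ex_minnP (ex_intro (fun N => m < ns N)%N m.+1 (ns_ge m.+1)).
have below j : (j < N)%N -> (ns j < m)%N.
  move=> jN; rewrite ltn_neqAle (introN eqP (off j)) /=.
  by rewrite leqNgt; apply/negP => /minN; lia.
apply: le_trans (tnorm_upred_le_inv_qprod m N below (ltnW mN)) _.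
have Q_gt0 : (0 < Q)%N by have := Q_ge2; lia.
rewrite lef_pV2 ?posrE ?ltr0n ?(prod_aratio_gt0 hu) ?muln_gt0 ?Q_gt0 // ler_nat.
by rewrite -(ns_ratio N); apply: qprod_ge_double.
Qed.

Lemma xS_gt0_lt1 : 0 < x < 1.
Proof.
have := tail_gt0_lt 0; rewrite /series /= big_geq // subr0 expr0 mul1r.
have : inv_u 0 <= 1 by rewrite invf_le1 ?ltr0n ?aseq_gt0 // ler1n aseq_gt0.
by move=> ? /andP[? ?]; apply/andP; split; lra.
Qed.

Lemma tnorm_upred_le_ns k m : (ns k <= m < ns k.+1)%N ->
  tnorm (upred m * x) <= tnorm (upred (ns k) * x).
Proof.
case/andP; rewrite leq_eqVlt => /predU1P[<- //|km] mk.
apply: le_trans (ltW (tnorm_upred_ns_gt k)).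
apply: tnorm_upred_off_ns; first by left; lia.
by move=> j nj; case: (leqP j k) => jk; have := ns_le _ _ jk; lia.
Qed.

Lemma ratio_gap_bound k :
  Q%:R^-1 - (2 ^+ (ns k.+1 - ns k).-1 * Q%:R ^+ 2)^-1
    <= Q%:R^-1 - ((qprod u (ns k) (ns k.+1))%:R)^-1 :> R.
Proof.
have Q_gt0 : (0 < Q)%N by have := Q_ge2; lia.
rewrite lerD2l lerN2 -!natrX -natrM.
rewrite lef_pV2 ?posrE ?ltr0n ?(prod_aratio_gt0 hu) ?muln_gt0 ?expn_gt0 ?Q_gt0 // ler_nat.
by have := qprod_ge_ends hu _ _ (ns_gap k); rewrite !ns_ratio mulnC -mulnn.
Qed.

Lemma rho_xS :
  rho u x 0 = Num.max (tnorm x) (sup (range (fun k => tnorm (upred (ns k) * x)))).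
Proof.
rewrite /rho (_ : (fun n => _) = fun n => Num.max (tnorm x) (tnorm ((u n)%:R * x))).
  2: by apply: funext => n; rewrite /tdist mulr0 !subr0.
set g := fun n => Num.max (tnorm x) (tnorm ((u n)%:R * x)).
set h := fun k => tnorm (upred (ns k) * x).
have h_ub : has_ubound (range h) by exists 2^-1 => _ [k _ <-]; apply: tnorm_le_half.
have g_ub : has_ubound (range g).
  by exists 2^-1 => _ [n _ <-]; rewrite /g ge_max !tnorm_le_half.
have le_sup_h k : h k <= sup (range h) by apply: ub_le_sup h_ub _ _; exists k.
have le_sup_g n : g n <= sup (range g) by apply: ub_le_sup g_ub _ _; exists n.
apply/le_anti/andP; split.
- apply: ge_sup; first by exists (g 0%N); exists 0%N.
  move=> _ [n _ <-]; rewrite /g ge_max le_max lexx /= le_max; apply/orP; right.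
  have [[k _ nk]|off] := pselect (range ns n.+1).
    by have := le_sup_h k; rewrite /h nk.
  have off_k k : ns k <> n.+1 by move=> nk; apply: off; exists k.
  apply: le_trans (tnorm_upred_off_ns n.+1 (or_introl (ltn0Sn n)) off_k) _.
  exact: le_trans (ltW (tnorm_upred_ns_gt 0)) (le_sup_h 0%N).
- rewrite ge_max; apply/andP; split.
    by apply: le_trans (le_sup_g 0%N); rewrite le_max lexx.
  apply: ge_sup; first by exists (h 0%N); exists 0%N.
  move=> _ [k _ <-]; rewrite /h; case: (ns k) => [|n] /=.
  + by rewrite mulr1n mul1r; apply: le_trans (le_sup_g 0%N); rewrite le_max lexx.
  + by apply: le_trans (le_sup_g n); rewrite le_max lexx orbT.
Qed.

End AlternatingPoint.

Lemma range_sub_of_xS_eq {R : realType} {u ns ns' Q} : a_sequence u ->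
  (forall k, (ns k + 2 <= ns k.+1)%N) -> (forall k, (ns' k + 2 <= ns' k.+1)%N) ->
  (forall k, aratio u (ns k) = Q) -> (forall k, aratio u (ns' k) = Q) ->
  xS R u ns = xS R u ns' -> range ns `<=` range ns'.
Proof.
move=> hu gap gap' ratio ratio' eq_x _ [k _ <-].
have [//|off] := pselect (range ns' (ns k)).
have two : (2 <= aratio u (ns k))%N by rewrite ratio; apply: Q_ge2 hu gap ratio.
have off_j j : ns' j <> ns k by move=> e; apply: off; exists j.
have := tnorm_upred_off_ns R u ns' Q hu gap' ratio' (ns k) (or_intror two) off_j.
by rewrite -eq_x leNgt tnorm_upred_ns_gt.
Qed.

Lemma xS_neq_mod1 {R : realType} {u ns ns' Q} : a_sequence u ->
  (forall k, (ns k + 2 <= ns k.+1)%N) -> (forall k, (ns' k + 2 <= ns' k.+1)%N) ->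
  (forall k, aratio u (ns k) = Q) -> (forall k, aratio u (ns' k) = Q) ->
  range ns' <> range ns -> forall z : int, xS R u ns - xS R u ns' != z%:~R.
Proof.
move=> hu gap gap' ratio ratio' neq z; apply/negP => /eqP diff.
have /andP[x_gt0 x_lt1] := xS_gt0_lt1 R u ns hu gap.
have /andP[x'_gt0 x'_lt1] := xS_gt0_lt1 R u ns' hu gap'.
have z0 : z = 0.
  have : (-1 < z%:~R :> R) /\ (z%:~R < 1 :> R) by rewrite -diff; split; lra.
  by rewrite -[-1 : R]/((-1 : int)%:~R) -[1 : R]/((1 : int)%:~R) !ltr_int => -[] ? ?; lia.
have eq_x : xS R u ns = xS R u ns' by apply/eqP; rewrite -subr_eq0 diff z0.
apply: neq; apply/seteqP; split.
- exact: range_sub_of_xS_eq hu gap' gap ratio' ratio (esym eq_x).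
- exact: range_sub_of_xS_eq hu gap gap' ratio ratio' eq_x.
Qed.

Lemma admissible_ratio {R : realType} {u ns} : admissible R u ns ->
  exists Q : nat, fine (q_limsup R u) = Q%:R /\ forall k, aratio u (ns k) = Q.
Proof.
case=> inS _; exists (aratio u (ns 0%N)); split; first by rewrite -(inS 0%N).
move=> k; move: (inS k) (inS 0%N); rewrite /Sstar /= => ek e0.
by apply/eqP; rewrite -(eqr_nat R) -(inj_eq (@EFin_inj R)) ek e0.
Qed.

Theorem mainTheorem5 (R : realType) (u : nat -> nat) (ns : nat -> nat) :
  a_sequence u ->
  (q_limsup R u < +oo)%E ->
  admissible R u ns ->
  let Q : R := fine (q_limsup R u) in
  let x : R := xS R u ns in
  let qr := fun i => ((aratio u i)%:R : R) in
  (* (a) *)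
  (forall k,
     (forall m, (ns k <= m < ns k.+1)%N ->
        tnorm ((u_pred u m)%:R * x) <= tnorm ((u_pred u (ns k))%:R * x)) /\
     (Q^-1 - (2 ^+ (ns k.+1 - ns k).-1 * Q ^+ 2)^-1
        <= (qr (ns k))^-1 - (\prod_(ns k <= i < (ns k.+1).+1) qr i)^-1) /\
     ((qr (ns k))^-1 - (\prod_(ns k <= i < (ns k.+1).+1) qr i)^-1
        <= tnorm ((u_pred u (ns k))%:R * x)) /\
     (tnorm ((u_pred u (ns k))%:R * x)
        <= (qr (ns k))^-1 - (\prod_(ns k <= i < (ns k.+1).+1) qr i)^-1
           + (\prod_(ns k <= i < (ns k.+2).+1) qr i)^-1)) /\
  (* (b) *)
  rho u x 0 = Num.max (tnorm x)
                (sup (range (fun k => tnorm ((u_pred u (ns k))%:R * x)))) /\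
  (* (c) *)
  (forall ns' : nat -> nat, admissible R u ns' -> range ns' <> range ns ->
     forall z : int, x - xS R u ns' != z%:~R).
Proof.
(* [q_u < +oo] is automatic: [q_u] equals the natural number [q_(n_1)]. *)
move=> hu _ ha Q x qr.
have [Qn [QE ratio]] := admissible_ratio ha; have gap := proj2 ha.
have prodE a b : \prod_(a <= i < b) qr i = (\prod_(a <= i < b) aratio u i)%:R.
  by rewrite natr_prod.
split; [|split].
- move=> k; rewrite !prodE /qr ratio /Q QE; split; first exact: tnorm_upred_le_ns.
  split; first exact: ratio_gap_bound.
  exact: tnorm_upred_ns_bounds.
- exact: rho_xS.
- move=> ns' ha'; have [Qn' [QE' ratio']] := admissible_ratio ha'.
  have eqQ : Qn' = Qn by apply/eqP; rewrite -(eqr_nat R) -QE -QE'.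
  rewrite eqQ in ratio'; exact: xS_neq_mod1 hu gap (proj2 ha') ratio ratio'.
Qed.
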